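(* Let $\mathcal C\subset\mathbb{R}^P$ be a compact convex set containing the origin as an interior point, and let $G=\gamma_{\mathcal C}$ be its gauge. Then there exists a constant $L_2>0$, independent of $y$, such that for any $\theta>0$, $\theta'>0$ and any $y\in\mathbb{R}^P$, $$\|\mathrm{Prox}_{\theta G}(y)-\mathrm{Prox}_{\theta' G}(y)\|\le L_2|\theta-\theta'|;$$ i.e. for any $y$, $\theta\mapsto\mathrm{Prox}_{\theta G}(y)$ is Lipschitz continuous on $]0,+\infty[$.
   Context: The gauge of a non-empty closed convex set $\mathcal C$ containing the origin is $\gamma_{\mathcal C}(y)=\inf\{\omega>0: y\in\omega\mathcal C\}$ (with $+\infty$ if the set is empty). $\mathrm{Prox}_{G}(y)=\operatorname{argmin}_z\frac12\|z-y\|^2+G(z)$. *)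

From HB Require Import structures.
From mathcomp Require Import all_boot all_order all_algebra.
From mathcomp Require Import all_classical all_reals all_analysis.
Set Implicit Arguments. Unset Strict Implicit. Unset Printing Implicit Defensive.
Import Order.TTheory GRing.Theory Num.Theory.
Import numFieldNormedType.Exports.
Local Open Scope classical_set_scope.
Local Open Scope ring_scope.

Definition enorm (R : realType) (P : nat) (v : 'rV[R]_P) : R :=
  Num.sqrt (\sum_(i < P) v ord0 i ^+ 2).

Definition convex_setR (R : realType) (P : nat) (C : set 'rV[R]_P) : Prop :=
  forall x y (t : R), C x -> C y -> 0 <= t -> t <= 1 ->
    C (t *: x + (1 - t) *: y).

(* Gauge: inf { w > 0 : y \in w C }, +oo if the set is empty. *)
Definition gauge (R : realType) (P : nat) (C : set 'rV[R]_P) (y : 'rV[R]_P)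
  : \bar R :=
  ereal_inf [set (w%:E)%E | w in [set w : R | 0 < w /\ exists2 c, C c & y = w *: c]].

Definition prox_obj (R : realType) (P : nat) (G : 'rV[R]_P -> \bar R)
  (y z : 'rV[R]_P) : \bar R :=
  ((2^-1 * enorm (z - y) ^+ 2)%:E + G z)%E.

Definition is_prox (R : realType) (P : nat) (G : 'rV[R]_P -> \bar R)
  (y z : 'rV[R]_P) : Prop :=
  forall w, (prox_obj G y z <= prox_obj G y w)%E.

From HB Require Import structures.
From mathcomp Require Import all_boot all_order all_algebra.
From mathcomp Require Import all_classical all_reals all_analysis.
From mathcomp Require Import ring lra.
Set Implicit Arguments. Unset Strict Implicit. Unset Printing Implicit Defensive.
Import Order.TTheory GRing.Theory Num.Theory.
Import numFieldNormedType.Exports.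
Local Open Scope classical_set_scope.
Local Open Scope ring_scope.

(* Since C contains a cube around 0, its gauge G is a finite, sublinear and
   L-Lipschitz function. Testing the optimality of z = Prox_{theta G}(y) and
   z' = Prox_{theta' G}(y) against their midpoint m, and using the parallelogram
   law together with G m <= (G z + G z') / 2, gives
   ||z - z'||^2 <= 2 (theta' - theta) (G z - G z') <= 2 L |theta - theta'| ||z - z'||. *)

Section EuclideanNorm.
Variables (R : realType) (P : nat).
Implicit Types (u v y : 'rV[R]_P).

Lemma enorm_ge0 v : 0 <= enorm v.
Proof. exact: sqrtr_ge0. Qed.

Lemma enorm_sqr v : enorm v ^+ 2 = \sum_(i < P) v ord0 i ^+ 2.
Proof. by rewrite sqr_sqrtr // sumr_ge0 // => i _; rewrite sqr_ge0. Qed.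

Lemma norm_entry_le_enorm v j : `|v ord0 j| <= enorm v.
Proof.
rewrite -(ler_pXn2r (n := 2)) ?nnegrE ?enorm_ge0 // enorm_sqr real_normK ?num_real //.
by rewrite (bigD1 j) //= lerDl sumr_ge0 // => i _; rewrite sqr_ge0.
Qed.

Lemma enormZ (a : R) v : enorm (a *: v) = `|a| * enorm v.
Proof.
rewrite /enorm -sqrtr_sqr -sqrtrM ?sqr_ge0 // mulr_sumr.
by congr Num.sqrt; apply: eq_bigr => i _; rewrite mxE exprMn.
Qed.

Lemma enorm_distC u v : enorm (u - v) = enorm (v - u).
Proof. by rewrite -opprB -scaleN1r enormZ normrN normr1 mul1r. Qed.

Lemma enorm_midpoint_sqr y u v :
  enorm (2^-1 *: (u + v) - y) ^+ 2 =
  (enorm (u - y) ^+ 2 + enorm (v - y) ^+ 2) / 2 - enorm (u - v) ^+ 2 / 4.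
Proof.
rewrite !enorm_sqr -big_split /= !mulr_suml -sumrB.
by apply: eq_bigr => i _; rewrite !mxE; field.
Qed.

End EuclideanNorm.

Section ProxComparison.
Variables (R : realType) (P : nat) (G : 'rV[R]_P -> R).
Hypothesis G_midpoint : forall u v : 'rV[R]_P, G (2^-1 *: (u + v)) <= 2^-1 * (G u + G v).

Lemma prox_dist_sqr_le (theta theta' : R) (y z z' : 'rV[R]_P) :
  0 <= theta -> 0 <= theta' ->
  is_prox (fun x => (theta%:E * (G x)%:E)%E) y z ->
  is_prox (fun x => (theta'%:E * (G x)%:E)%E) y z' ->
  enorm (z - z') ^+ 2 <= 2 * ((theta' - theta) * (G z - G z')).
Proof.
move=> theta_ge0 theta'_ge0 prox_z prox_z'.
pose m := 2^-1 *: (z + z').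
have := prox_z m; have := prox_z' m.
rewrite /prox_obj -!EFinM -!EFinD !lee_fin !enorm_midpoint_sqr => opt_z' opt_z.
have Gm_z : theta * G m <= theta * (2^-1 * (G z + G z')).
  exact: ler_wpM2l (G_midpoint z z').
have Gm_z' : theta' * G m <= theta' * (2^-1 * (G z + G z')).
  exact: ler_wpM2l (G_midpoint z z').
nra.
Qed.

Variable L : R.
Hypothesis L_ge0 : 0 <= L.
Hypothesis G_lipschitz : forall u v, `|G u - G v| <= L * enorm (u - v).

Lemma prox_lipschitz_in_scale (theta theta' : R) (y z z' : 'rV[R]_P) :
  0 <= theta -> 0 <= theta' ->
  is_prox (fun x => (theta%:E * (G x)%:E)%E) y z ->
  is_prox (fun x => (theta'%:E * (G x)%:E)%E) y z' ->
  enorm (z - z') <= 2 * L * `|theta - theta'|.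
Proof.
move=> theta_ge0 theta'_ge0 prox_z prox_z'.
have sqr_le := prox_dist_sqr_le theta_ge0 theta'_ge0 prox_z prox_z'.
have cross_le : (theta' - theta) * (G z - G z') <=
                `|theta - theta'| * (L * enorm (z - z')).
  apply: (le_trans (ler_norm _)); rewrite normrM distrC.
  by apply: ler_wpM2l => //; apply: G_lipschitz.
have [e0 | e_neq0] := eqVneq (enorm (z - z')) 0; first by rewrite e0 !mulr_ge0.
have e_gt0 : 0 < enorm (z - z') by rewrite lt_neqAle eq_sym e_neq0 enorm_ge0.
rewrite -(ler_pM2r e_gt0) -expr2; nra.
Qed.

End ProxComparison.

Lemma interior0_cube (R : realType) (P : nat) (C : set 'rV[R]_P) :
  interior C 0 ->
  exists2 r : R, 0 < r & forall c : 'rV[R]_P, (forall j, `|c ord0 j| < r) -> C c.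
Proof.
move=> /nbhs_ballP [r r_gt0 ballC]; exists r => // c c_small; apply: ballC.
by split => // i j; rewrite (ord1 i) mxE /ball /= sub0r normrN; apply: c_small.
Qed.

Section Gauge.
Variables (R : realType) (P : nat) (C : set 'rV[R]_P).
Hypothesis C_convex : convex_setR C.
Variable r : R.
Hypothesis r_gt0 : 0 < r.
Hypothesis cube_subset : forall c : 'rV[R]_P, (forall j, `|c ord0 j| < r) -> C c.
Implicit Types (x : 'rV[R]_P) (w : R).

Definition dilations x := [set w | 0 < w /\ exists2 c, C c & x = w *: c].

Lemma dilationsD x x' w w' :
  dilations x w -> dilations x' w' -> dilations (x + x') (w + w').
Proof.
move=> [w_gt0 [c Cc ->]] [w'_gt0 [c' Cc' ->]].
have ww'_gt0 : 0 < w + w' by rewrite addr_gt0.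
split => //; exists (w / (w + w') *: c + (1 - w / (w + w')) *: c').
  apply: C_convex => //; first by rewrite divr_ge0 // ltW.
  by rewrite ler_pdivrMr // mul1r lerDl ltW.
by rewrite scalerDr !scalerA; congr (_ *: _ + _ *: _); field; rewrite gt_eqF.
Qed.

Lemma dilations_enorm x e : 0 < e -> dilations x (enorm x / r + e).
Proof.
move=> e_gt0; have w_gt0 : 0 < enorm x / r + e.
  by rewrite ltr_wpDl // divr_ge0 ?enorm_ge0 // ltW.
split => //; exists ((enorm x / r + e)^-1 *: x); last first.
  by rewrite scalerA mulfV ?scale1r // gt_eqF.
apply: cube_subset => j; rewrite mxE normrM gtr0_norm ?invr_gt0 //.
rewrite mulrC ltr_pdivrMr //; apply: (le_lt_trans (norm_entry_le_enorm x j)).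
by rewrite mulrDr mulrCA divff ?gt_eqF // mulr1 ltrDl mulr_gt0.
Qed.

Lemma gauge_le x w : dilations x w -> (gauge C x <= w%:E)%E.
Proof. by move=> xw; apply: ereal_inf_lbound; exists w. Qed.

Lemma gauge_fin_num x : gauge C x \is a fin_num.
Proof.
rewrite ge0_fin_numE; last first.
  by apply: le_ereal_inf_tmp => _ [w [w_gt0 _] <-]; rewrite lee_fin ltW.
exact: le_lt_trans (gauge_le (dilations_enorm x ltr01)) (ltry _).
Qed.

Definition rgauge x := fine (gauge C x).

Lemma gaugeE : gauge C = fun x => (rgauge x)%:E.
Proof. by apply: funext => x; rewrite /rgauge fineK // gauge_fin_num. Qed.

Lemma rgauge_le x w : dilations x w -> rgauge x <= w.
Proof. by move=> /gauge_le; rewrite gaugeE lee_fin. Qed.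

Lemma rgauge_approx x e : 0 < e -> exists2 w, dilations x w & w < rgauge x + e.
Proof.
move=> e_gt0; have [_ [w xw <-]] := lb_ereal_inf_adherent e_gt0 (gauge_fin_num x).
by rewrite -/(gauge C x) gaugeE -EFinD lte_fin; exists w.
Qed.

Lemma rgauge_le_enorm x : rgauge x <= enorm x / r.
Proof. by apply/ler_addgt0Pr => e e_gt0; apply/rgauge_le/dilations_enorm. Qed.

Lemma rgaugeD x x' : rgauge (x + x') <= rgauge x + rgauge x'.
Proof.
apply/ler_addgt0Pr => e e_gt0; have e2_gt0 : 0 < e / 2 by rewrite divr_gt0.
have [w xw w_lt] := rgauge_approx x e2_gt0.
have [w' xw' w'_lt] := rgauge_approx x' e2_gt0.
have := rgauge_le (dilationsD xw xw'); lra.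
Qed.

Lemma rgaugeZ_le (s : R) x : 0 < s -> rgauge (s *: x) <= s * rgauge x.
Proof.
move=> s_gt0; apply/ler_addgt0Pr => e e_gt0.
have [w [w_gt0 [c Cc xE]] w_lt] := rgauge_approx x (divr_gt0 e_gt0 s_gt0).
have sxw : dilations (s *: x) (s * w).
  by split; [rewrite mulr_gt0 | exists c; rewrite // xE scalerA].
apply: le_trans (rgauge_le sxw) _.
have -> : s * rgauge x + e = s * (rgauge x + e / s).
  by rewrite mulrDr mulrCA divff ?gt_eqF ?mulr1.
by rewrite ler_pM2l // ltW.
Qed.

Lemma rgauge_midpoint x x' :
  rgauge (2^-1 *: (x + x')) <= 2^-1 * (rgauge x + rgauge x').
Proof.
apply: le_trans (rgaugeZ_le _ _) _; first by rewrite invr_gt0.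
by rewrite ler_pM2l ?invr_gt0 // rgaugeD.
Qed.

Lemma rgauge_lipschitz x x' : `|rgauge x - rgauge x'| <= r^-1 * enorm (x - x').
Proof.
have sub_le a b : rgauge a - rgauge b <= enorm (a - b) / r.
  rewrite lerBlDr -{1}(subrK b a); apply: le_trans (rgaugeD _ _) _.
  by rewrite lerD2r rgauge_le_enorm.
rewrite mulrC ler_norml sub_le andbT lerNl opprB enorm_distC.
exact: sub_le.
Qed.

End Gauge.

Theorem proposition5 (R : realType) (P : nat) (C : set 'rV[R]_P) :
  compact C -> convex_setR C -> (interior C) 0 ->
  exists L2 : R, 0 < L2 /\
    forall (theta theta' : R) (y z z' : 'rV[R]_P),
      0 < theta -> 0 < theta' ->
      is_prox (fun x => (theta%:E * gauge C x)%E) y z ->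
      is_prox (fun x => (theta'%:E * gauge C x)%E) y z' ->
      enorm (z - z') <= L2 * `|theta - theta'|.
Proof.
move=> _ C_convex /interior0_cube [r r_gt0 cube_subset].
exists (2 * r^-1); split; first by rewrite mulr_gt0 ?invr_gt0.
move=> theta theta' y z z' theta_gt0 theta'_gt0.
rewrite (gaugeE r_gt0 cube_subset).
apply: prox_lipschitz_in_scale (ltW theta_gt0) (ltW theta'_gt0).
- move=> u v; exact (rgauge_midpoint C_convex r_gt0 cube_subset u v).
- by rewrite invr_ge0 ltW.
- move=> u v; exact (rgauge_lipschitz C_convex r_gt0 cube_subset u v).
Qed.
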